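(* The law $\mathrm{y}\diamond(\mathrm{x}\diamond(\mathrm{y}\diamond(\mathrm{y}\diamond\mathrm{y})))\simeq\mathrm{x}$ does not imply the law $\mathrm{x}\simeq(\mathrm{x}\diamond\mathrm{x})\diamond(\mathrm{x}\diamond(\mathrm{x}\diamond\mathrm{x}))$.
   Context: A magma is a set with a binary operation $\diamond$; it satisfies a law if the identity holds for all assignments of variables. A law implies another if every magma satisfying the first satisfies the second. *)

Definition law1 {M : Type} (op : M -> M -> M) : Prop :=
  forall x y : M, op y (op x (op y (op y y))) = x.

Definition law2 {M : Type} (op : M -> M -> M) : Prop :=
  forall x : M, x = op (op x x) (op x (op x x)).

From Stdlib Require Import Lia.

(* Countermodel: binary trees, where [a ◇ b] is the formal tree [Nd a b] except
   that [a ◇ Nd x (Nd a (Nd a a))] collapses to [x].  This is the term model of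
   the single rewrite rule y ◇ (x ◇ (y ◇ (y ◇ y))) -> x: a tree is never a
   proper subtree of itself, so the inner products y ◇ y, y ◇ (y ◇ y) and
   x ◇ (y ◇ (y ◇ y)) never collapse, and law 1 holds.  On the other hand
   (x ◇ x) ◇ (x ◇ (x ◇ x)) does not collapse either, so law 2 fails. *)

Inductive tree : Type := Lf : tree | Nd : tree -> tree -> tree.

Fixpoint size (t : tree) : nat :=
  match t with Lf => 1 | Nd a b => S (size a + size b) end.

Lemma tree_neq_size (a b : tree) : size a <> size b -> a <> b.
Proof. intros Hsize ->. contradiction. Qed.

Definition tree_eq_dec (a b : tree) : {a = b} + {a <> b}.
Proof. decide equality. Defined.

Definition cube (a : tree) : tree := Nd a (Nd a a).

Definition op (a b : tree) : tree :=
  match b with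
  | Nd x c => if tree_eq_dec c (cube a) then x else Nd a b
  | Lf => Nd a Lf
  end.

Lemma op_Nd_neq (a x c : tree) : c <> cube a -> op a (Nd x c) = Nd a (Nd x c).
Proof. intros Hc. unfold op. destruct (tree_eq_dec c (cube a)); congruence. Qed.

Lemma op_Nd_cube (a x : tree) : op a (Nd x (cube a)) = x.
Proof. unfold op. destruct (tree_eq_dec (cube a) (cube a)); congruence. Qed.

Lemma op_diag (y : tree) : op y y = Nd y y.
Proof.
  destruct y as [|x c]; [reflexivity|].
  apply op_Nd_neq. apply tree_neq_size. unfold cube. simpl. lia.
Qed.

Lemma op_diag_cube (y : tree) : op y (Nd y y) = cube y.
Proof.
  apply op_Nd_neq. apply tree_neq_size. unfold cube. simpl. lia.
Qed.

Lemma op_cube_neq (x y : tree) : op x (cube y) = Nd x (cube y).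
Proof.
  apply op_Nd_neq. unfold cube. intros Hyx. injection Hyx as -> Hx.
  revert Hx. apply tree_neq_size. simpl. lia.
Qed.

Lemma law1_op : law1 op.
Proof.
  intros x y. rewrite op_diag, op_diag_cube, op_cube_neq. apply op_Nd_cube.
Qed.

Lemma not_law2_op : ~ law2 op.
Proof. intros H. specialize (H Lf). vm_compute in H. discriminate H. Qed.

Theorem mainTheorem9 :
  ~ (forall (M : Type) (op : M -> M -> M), law1 op -> law2 op).
Proof.
  intros H. exact (not_law2_op (H tree op law1_op)).
Qed.
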